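(* A finite poset $P$ is a c.i.-poset if and only if it does not contain any of the following three posets as an induced subposet: $P_1$: four elements $a,b,c,d$ with $c<b<a$ and $c<d$, and no other relations (so $d$ is incomparable to $a$ and $b$); $P_2$: five elements $e,f,g,h,i$ with $f<e$, $f<g$, $h<g$, $h<i$, and no other relations; $P_3$: four elements, three pairwise incomparable elements each lying above a common fourth element, and no other relations.
   Context: A poset $Q$ is an induced subposet of $P$ if there is an injective map $\iota:Q\to P$ with $\iota(q)\le_P\iota(q')$ if and only if $q\le_Qq'$. For a finite poset $P$, a connected order ideal is a nonempty downward-closed subset whose induced Hasse diagram is connected; $\mathcal{J}_{\mathrm{conn}}(P)$ is the set of these; two connected order ideals intersect nontrivially if they are neither disjoint nor nested, and $\Pi(P)$ is the set of such unordered pairs. $P$ is a c.i.-poset if $|\mathcal{J}_{\mathrm{conn}}(P)|-|\Pi(P)|=|P|$; equivalently, for any field $k$, the presentation of the ring $R_P$ (the span in $k[x_p:p\in P]$ of the monomials $\prod_px_p^{f(p)}$ over $f:P\to\mathbb{N}$ weakly order-reversing) as a quotient of $k[U_J]_{J\in\mathcal{J}_{\mathrm{conn}}(P)}$ via $U_J\mapsto\prod_{p\in J}x_p$ is a complete intersection presentation. *)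

From HB Require Import structures.
From mathcomp Require Import all_boot all_order all_algebra.
Set Implicit Arguments. Unset Strict Implicit. Unset Printing Implicit Defensive.
Import Order.TTheory GRing.Theory Num.Theory.
Local Open Scope order_scope.

Section PosetDefs.
Context {disp : Order.disp_t} {P : finPOrderType disp}.

Definition covers (x y : P) : bool :=
  (x < y) && ~~ [exists z : P, (x < z) && (z < y)].

Definition order_ideal (J : {set P}) : bool :=
  [forall x : P, forall y : P, (y \in J) && (x <= y) ==> (x \in J)].

Definition hasse_in (J : {set P}) : rel P :=
  [rel x y | [&& x \in J, y \in J & covers x y || covers y x]].

Definition hasse_connected (J : {set P}) : bool :=
  [forall x in J, forall y in J, connect (hasse_in J) x y].

Definition Jconn : {set {set P}} :=
  [set J : {set P} | [&& J != set0, order_ideal J & hasse_connected J]].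

Definition intersect_nontrivially (J J' : {set P}) : bool :=
  [&& ~~ [disjoint J & J'], ~~ (J \subset J') & ~~ (J' \subset J)].

Definition Pi : {set {set {set P}}} :=
  [set [set J; J'] | J in Jconn, J' in [set J' in Jconn | intersect_nontrivially J J']].

End PosetDefs.

Definition ci_poset {disp : Order.disp_t} (P : finPOrderType disp) : Prop :=
  ((Posz #|@Jconn disp P| - Posz #|@Pi disp P|)%R = Posz #|P|).

Definition induced_subposet (Q : finType) (leQ : rel Q)
  {disp : Order.disp_t} (P : finPOrderType disp) : Prop :=
  exists iota : Q -> P, injective iota /\
    forall q q' : Q, (iota q <= iota q') = leQ q q'.

(* P1: a=0, b=1, c=2, d=3 with c<b<a, c<d *)
Definition leP1 : rel 'I_4 :=
  fun i j => (i == j) || ((val i, val j) \in [:: (2,1); (2,0); (1,0); (2,3)]%N).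
(* P2: e=0, f=1, g=2, h=3, i=4 with f<e, f<g, h<g, h<i *)
Definition leP2 : rel 'I_5 :=
  fun i j => (i == j) || ((val i, val j) \in [:: (1,0); (1,2); (3,2); (3,4)]%N).
Definition leP3 : rel 'I_4 :=
  fun i j => (i == j) || ((val i, val j) \in [:: (0,1); (0,2); (0,3)]%N).

From HB Require Import structures.
From mathcomp Require Import all_boot all_order all_algebra.
Set Implicit Arguments. Unset Strict Implicit. Unset Printing Implicit Defensive.
Import Order.POrderTheory.
Local Open Scope order_scope.

(* A connected order ideal J is either principal or the union of a pair in Pi:
   take a largest set S of maximal elements of J whose downset is connected and
   different from J; adding one more maximal element m of J that shares a lower
   bound with S must give J, so J = down m :|: downset S.  Such a union is never
   principal, so cover maps Pi onto the non-principal connected ideals and P is a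
   c.i.-poset iff this map is injective.  Each of P1, P2, P3 yields two different
   pairs with the same union.  Without them, a connected ideal has at most two
   maximal elements, any two of which have a common lower bound, and each member
   of a pair in Pi is the principal ideal of a maximal element of the union; so
   the pair is recovered from its union. *)

Lemma set2_neq (T : finType) (a b c d : T) :
  a != c -> a != d -> [set a; b] != [set c; d].
Proof.
move=> ac ad; apply/eqP => abcd; have := set21 a b.
by rewrite abcd => /set2P[ea | ea]; [move: ac | move: ad]; rewrite ea eqxx.
Qed.

Section ConnectedIdeals.
Context {disp : Order.disp_t} {P : finPOrderType disp}.
Implicit Types (x y z m : P) (A B J U S : {set P}) (p q : {set {set P}}).

Definition down x : {set P} := [set y | y <= x].
Definition downset S : {set P} := [set y | [exists s in S, y <= s]].
Definition maximal_in J m := (m \in J) && [forall z in J, (m <= z) ==> (z == m)].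
Definition principal : {set {set P}} := [set down x | x in P].

Lemma in_down x y : (y \in down x) = (y <= x).
Proof. by rewrite inE. Qed.

Lemma order_idealP J :
  reflect (forall x y, y \in J -> x <= y -> x \in J) (order_ideal J).
Proof.
apply: (iffP forallP) => [H x y yJ xy | H x]; last first.
  by apply/forallP => y; apply/implyP => /andP[]; apply: H.
by have /forallP/(_ y)/implyP := H x; apply; rewrite yJ.
Qed.

Lemma hasse_connectedP J :
  reflect {in J &, forall x y, connect (hasse_in J) x y} (hasse_connected J).
Proof.
apply: (iffP forall_inP) => [H x y xJ yJ | H x xJ].
  by have /forall_inP := H x xJ; apply.
by apply/forall_inP => y; apply: H.
Qed.

Lemma JconnP J :
  reflect [/\ J != set0, order_ideal J & hasse_connected J] (J \in Jconn).
Proof. by rewrite inE; apply: and3P. Qed.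

Lemma downsetP S y : reflect (exists2 s, s \in S & y <= s) (y \in downset S).
Proof. by rewrite inE; apply: exists_inP. Qed.

Lemma nondisjointP A B :
  reflect (exists2 x, x \in A & x \in B) (~~ [disjoint A & B]).
Proof.
rewrite -setI_eq0; apply: (iffP (set0Pn _)) => [[x /setIP[]] | [x xA xB]].
  by exists x.
by exists x; apply/setIP.
Qed.

Lemma hasse_in_sym J : symmetric (hasse_in J).
Proof. by move=> x y; rewrite /hasse_in /= andbCA orbC. Qed.

Lemma down_proper x y : x < y -> down x \proper down y.
Proof.
move=> xy; apply/properP; split.
  by apply/subsetP => z; rewrite !inE => /le_trans; apply; apply: ltW.
by exists y; rewrite !inE ?lexx // lt_geF.
Qed.

Lemma maximal_inP J m :
  reflect (m \in J /\ forall z, z \in J -> m <= z -> z = m) (maximal_in J m).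
Proof.
apply: (iffP andP) => [[mJ /forall_inP H] | [mJ H]]; split=> //.
  by move=> z zJ mz; apply/eqP; apply: (implyP (H z zJ)).
by apply/forall_inP => z zJ; apply/implyP => mz; rewrite (H z zJ mz).
Qed.

Lemma exists_maximal J y : y \in J -> exists2 m, maximal_in J m & y <= m.
Proof.
move=> yJ; pose above m := (m \in J) && (y <= m).
have above_y : above y by rewrite /above yJ lexx.
case: (arg_maxnP (fun m => #|down m|) above_y) => m /andP[mJ ym] max_m.
exists m => //; apply/maximal_inP; split=> // z zJ mz.
have above_z : above z by rewrite /above zJ (le_trans ym).
apply/eqP; apply: contraTT (max_m z above_z) => zm.
by rewrite -ltnNge proper_card // down_proper // lt_neqAle eq_sym zm.
Qed.

Lemma maximal_in_nle J m z : maximal_in J m -> z \in J -> z != m -> ~~ (m <= z).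
Proof. by move=> /maximal_inP[_ max_m] zJ; apply: contraNN => /(max_m z zJ)->. Qed.

Lemma maximal_in_neq_le J m m' z :
  maximal_in J m -> maximal_in J m' -> m != m' -> z <= m' -> ~~ (m <= z).
Proof.
move=> /maximal_inP[_ max_m] /maximal_inP[m'J _] mm' zm'.
by apply: contra mm' => mz; rewrite (max_m m' m'J (le_trans mz zm')).
Qed.

Lemma maximal_in_sub A J m : A \subset J -> m \in A -> maximal_in J m -> maximal_in A m.
Proof.
move=> /subsetP AJ mA /maximal_inP[_ max_m]; apply/maximal_inP; split=> // z zA.
exact/max_m/AJ.
Qed.

Lemma covers_lt x y : covers x y -> x < y.
Proof. by case/andP. Qed.

Lemma exists_cover_below x y : y < x -> exists2 z, y <= z & covers z x.
Proof.
move=> yx; have [|z /maximal_inP[]] := @exists_maximal [set w | y <= w < x] y.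
  by rewrite inE lexx.
rewrite inE => /andP[yz zx] max_z _; exists z; rewrite // /covers zx /=.
apply/existsP => -[w /andP[zw wx]].
have := max_z w; rewrite inE (le_trans yz (ltW zw)) wx => /(_ isT (ltW zw)) wz.
by rewrite wz ltxx in zw.
Qed.

Lemma connect_hasse_le J x y :
  order_ideal J -> x \in J -> y <= x -> connect (hasse_in J) y x.
Proof.
move=> /order_idealP idJ; have [n] := ubnP #|down x|.
elim: n x => // n IH x xn xJ yx.
have [-> // | nyx] := eqVneq y x.
have [z yz zx] : exists2 z, y <= z & covers z x.
  by apply: exists_cover_below; rewrite lt_neqAle nyx.
have zJ : z \in J by apply: idJ xJ (ltW (covers_lt zx)).
apply: connect_trans (IH z _ zJ yz) (connect1 _); last by rewrite /hasse_in /= zJ xJ zx.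
by rewrite -ltnS (leq_trans _ xn) // ltnS proper_card ?down_proper ?covers_lt.
Qed.

Lemma down_Jconn x : down x \in Jconn.
Proof.
have id_down : order_ideal (down x).
  by apply/order_idealP => a b; rewrite !inE => /[swap]; apply: le_trans.
have x_down : x \in down x by rewrite inE.
apply/JconnP; split=> //; first by apply/set0Pn; exists x.
apply/hasse_connectedP => a b; rewrite !inE => ax bx.
rewrite (connect_trans (connect_hasse_le id_down x_down ax)) //.
by rewrite (sym_connect_sym (@hasse_in_sym _)) connect_hasse_le.
Qed.

Lemma connect_hasse_sub A J :
  A \subset J -> subrel (connect (hasse_in A)) (connect (hasse_in J)).
Proof.
move=> /subsetP AJ; apply: connect_sub => x y /and3P[xA yA xy].
by apply: connect1; rewrite /hasse_in /= (AJ _ xA) (AJ _ yA).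
Qed.

Lemma Jconn_setU A B :
  A \in Jconn -> B \in Jconn -> ~~ [disjoint A & B] -> A :|: B \in Jconn.
Proof.
move=> /JconnP[_ /order_idealP idA /hasse_connectedP cA].
move=> /JconnP[_ /order_idealP idB /hasse_connectedP cB].
case/nondisjointP => w wA wB.
have cA' := connect_hasse_sub (subsetUl A B).
have cB' := connect_hasse_sub (subsetUr A B).
apply/JconnP; split.
- by apply/set0Pn; exists w; rewrite inE wA.
- apply/order_idealP => x y; rewrite !inE => /orP[yA | yB] xy.
    by rewrite (idA x y).
  by rewrite (idB x y) ?orbT.
apply/hasse_connectedP => x y; rewrite !inE => /orP[xA | xB] /orP[yA | yB].
- exact/cA'/cA.
- exact: connect_trans (cA' _ _ (cA x w xA wA)) (cB' _ _ (cB w y wB yB)).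
- exact: connect_trans (cB' _ _ (cB x w xB wB)) (cA' _ _ (cA w y wA yA)).
- exact/cB'/cB.
Qed.

Lemma hasse_exit J U x y :
  connect (hasse_in J) x y -> order_ideal U -> x \in U -> y \notin U ->
  exists u v, [/\ u \in U, v \in J, v \notin U & u < v].
Proof.
move=> /connectP[s]; elim: s x => [|z s IH] x /=; first by move=> _ -> _ ->.
case/andP=> /and3P[xJ zJ xz] zs ys idU xU yU.
have [zU | zU] := boolP (z \in U); first exact: IH zs ys idU zU yU.
case/orP: xz => [/covers_lt xz | /covers_lt zx]; first by exists x, z.
by rewrite (order_idealP _ idU z x xU (ltW zx)) in zU.
Qed.

Lemma Jconn_exit_maximal J U x y :
  J \in Jconn -> order_ideal U -> U \subset J -> x \in U -> y \in J -> y \notin U ->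
  exists u m, [/\ u \in U, maximal_in J m, u <= m & m \notin U].
Proof.
move=> /JconnP[_ _ /hasse_connectedP cJ] idU /subsetP UJ xU yJ yU.
have [u [v [uU vJ vU uv]]] := hasse_exit (cJ x y (UJ x xU) yJ) idU xU yU.
have [m max_m vm] := exists_maximal vJ.
exists u, m; split=> //; first exact: le_trans (ltW uv) vm.
by apply: contra vU => mU; apply: (order_idealP _ idU v m).
Qed.

Lemma downset_ideal S : order_ideal (downset S).
Proof.
apply/order_idealP => a b /downsetP[s sS bs] ab.
by apply/downsetP; exists s; rewrite // (le_trans ab).
Qed.

Lemma downset1 m : downset [set m] = down m.
Proof.
apply/setP => y; apply/downsetP/idP => [[s /set1P-> ym] | ]; first by rewrite inE.
by rewrite inE => ym; exists m; rewrite ?set11.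
Qed.

Lemma downsetU1 m S : downset (m |: S) = down m :|: downset S.
Proof.
apply/setP => y; rewrite [y \in _ :|: _]inE [y \in down m]inE; apply/downsetP/orP.
  by case=> s /setU1P[-> | sS] ys; [left | right; apply/downsetP; exists s].
by case=> [ym | /downsetP[s sS ys]]; [exists m | exists s]; rewrite ?setU11 ?setU1r.
Qed.

Lemma downset_sub J S : order_ideal J -> S \subset J -> downset S \subset J.
Proof.
move=> /order_idealP idJ /subsetP SJ; apply/subsetP => y /downsetP[s sS ys].
exact: idJ (SJ s sS) ys.
Qed.

Lemma cover2 A B : cover [set A; B] = A :|: B.
Proof.
apply/setP => x; apply/bigcupP/setUP => [[C /set2P[]-> xC] | [xA | xB]].
- by left.
- by right.
- by exists A; rewrite ?set21.
- by exists B; rewrite ?set22.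
Qed.

Lemma intersect_nontriviallyW A B x a b :
  x \in A -> x \in B -> a \in A -> a \notin B -> b \in B -> b \notin A ->
  intersect_nontrivially A B.
Proof.
move=> xA xB aA aB bB bA; apply/and3P; split.
- by apply/nondisjointP; exists x.
- by apply/subsetPn; exists a.
- by apply/subsetPn; exists b.
Qed.

Lemma PiP p : reflect (exists A B, [/\ A \in Jconn, B \in Jconn,
  intersect_nontrivially A B & p = [set A; B]]) (p \in Pi).
Proof.
apply: (iffP imset2P) => [[A B AJ] | [A [B [AJ BJ AB ->]]]].
  by rewrite inE => /andP[BJ AB] ->; exists A, B.
by exists A B; rewrite // inE BJ.
Qed.

Lemma set2_Pi A B : A \in Jconn -> B \in Jconn -> intersect_nontrivially A B ->
  [set A; B] \in Pi.
Proof. by move=> AJ BJ AB; apply/PiP; exists A, B. Qed.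

Lemma down_inj : injective down.
Proof.
move=> x y exy; apply/le_anti/andP; split.
  by rewrite -in_down -exy in_down.
by rewrite -in_down exy in_down.
Qed.

Lemma card_Jconn : #|@Jconn _ P| = (#|P| + #|Jconn :\: principal|)%N.
Proof.
rewrite -(cardsID principal Jconn) (setIidPr _) ?card_imset //; first exact: down_inj.
by apply/subsetP => _ /imsetP[x _ ->]; apply: down_Jconn.
Qed.

Lemma cover_Pi_nonprincipal p : p \in Pi -> cover p \in Jconn :\: principal.
Proof.
case/PiP => A [B [AJ BJ /and3P[AB nAB nBA] ->]]; rewrite cover2 inE Jconn_setU // andbT.
have /JconnP[_ /order_idealP idA _] := AJ; have /JconnP[_ /order_idealP idB _] := BJ.
apply/imsetP => -[x _ ABx].
have : x \in A :|: B by rewrite ABx inE.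
case/setUP => [xA | xB]; [move/negP: nBA | move/negP: nAB]; apply; apply/subsetP => y yAB.
- by apply: (idA y x xA); rewrite -in_down -ABx inE yAB orbT.
- by apply: (idB y x xB); rewrite -in_down -ABx inE yAB.
Qed.

Lemma down_downset_Pi J S m u :
  S \subset [set z | maximal_in J z] -> downset S \in Jconn -> maximal_in J m ->
  m \notin downset S -> u <= m -> u \in downset S -> [set down m; downset S] \in Pi.
Proof.
move=> /subsetP S_max S_conn max_m mS um uS.
have [s sS us] := downsetP _ _ uS.
apply: set2_Pi; rewrite ?down_Jconn //.
apply: (intersect_nontriviallyW (x := u) (a := m) (b := s)); rewrite ?in_down //.
  by apply/downsetP; exists s.
have /S_max := sS; rewrite inE => /maximal_inP[_ max_s].
have [mJ _] := maximal_inP _ _ max_m.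
by apply: contra mS => sm; rewrite (max_s m mJ sm); apply/downsetP; exists s.
Qed.

Lemma nonprincipal_cover_Pi J : J \in Jconn :\: principal -> J \in cover @: Pi.
Proof.
case/setDP => JJ Jnp; have /JconnP[/set0Pn[y yJ] idJ _] := JJ.
have [m0 max_m0 _] := exists_maximal yJ.
pose grows S := [&& S \subset [set m | maximal_in J m], downset S \in Jconn
  & downset S != J].
have grows_m0 : grows [set m0].
  rewrite /grows downset1 down_Jconn sub1set inE max_m0 /=.
  by apply: contraNneq Jnp => <-; apply: imset_f.
have [S /and3P[S_max S_conn S_neq] max_S] := arg_maxnP (fun S => #|S|) grows_m0.
have S_sub : downset S \subset J.
  apply: downset_sub => //; apply/subsetP => s /(subsetP S_max).
  by rewrite inE => /maximal_inP[].
have [x xS] : exists x, x \in downset S by case/JconnP: S_conn => /set0Pn.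
have [z zJ zS] : exists2 z, z \in J & z \notin downset S.
  by apply/subsetPn; apply: contra S_neq => JS; rewrite eqEsubset S_sub.
have [u [m [uS max_m um mS]]] :=
  Jconn_exit_maximal JJ (downset_ideal S) S_sub xS zJ zS.
have mNS : m \notin S by apply: contra mS => mS'; apply/downsetP; exists m.
have meet : ~~ [disjoint down m & downset S].
  by apply/nondisjointP; exists u; rewrite ?in_down.
have cover_J : down m :|: downset S = J.
  rewrite -downsetU1; apply/eqP; apply: contraT => neq.
  have : grows (m |: S).
    by rewrite /grows downsetU1 Jconn_setU ?down_Jconn // -downsetU1 neq
       subUset sub1set inE max_m S_max.
  by move/max_S; rewrite cardsU1 mNS add1n /= ltnn.
apply/imsetP; exists [set down m; downset S]; last by rewrite cover2.
exact: down_downset_Pi S_max S_conn max_m mS um uS.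
Qed.

Lemma cover_Pi : cover @: Pi = Jconn :\: principal.
Proof.
apply/setP => J; apply/imsetP/idP => [[p pP ->] | /nonprincipal_cover_Pi/imsetP //].
exact: cover_Pi_nonprincipal.
Qed.

Lemma ci_posetE : ci_poset P <-> {in @Pi _ P &, injective cover}.
Proof.
rewrite /ci_poset card_Jconn -cover_Pi PoszD.
split=> [/eqP | /imset_injP/eqP->]; last exact: GRing.addrK.
rewrite GRing.subr_eq => /eqP/GRing.addrI [card_eq].
by apply/imset_injP; rewrite card_eq.
Qed.

Lemma down_subset x y : x <= y -> down x \subset down y.
Proof. by move=> xy; apply/subsetP => z; rewrite !in_down => /le_trans; apply. Qed.

Lemma down_setU_Jconn c a b : c <= a -> c <= b -> down a :|: down b \in Jconn.
Proof.
move=> ca cb; apply: Jconn_setU; rewrite ?down_Jconn //.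
by apply/nondisjointP; exists c; rewrite in_down.
Qed.

Lemma set_neq_witness A B x : x \in A -> x \notin B -> A != B.
Proof. by move=> xA; apply: contraNneq => <-. Qed.

Lemma not_injective_cover p q : p \in Pi -> q \in Pi -> p != q -> cover p = cover q ->
  ~ {in @Pi _ P &, injective cover}.
Proof. by move=> pP qP /eqP pq pq_cover inj; apply/pq/inj. Qed.

Lemma P1_not_injective : induced_subposet leP1 P -> ~ {in @Pi _ P &, injective cover}.
Proof.
case=> f [_ f_le].
pose a := f (@Ordinal 4 0 isT); pose b := f (@Ordinal 4 1 isT).
pose c := f (@Ordinal 4 2 isT); pose d := f (@Ordinal 4 3 isT).
have [cb ca cd ba] : [/\ c <= b, c <= a, c <= d & b <= a] by rewrite !f_le.
have [ab ad bd da] : [/\ ~~ (a <= b), ~~ (a <= d), ~~ (b <= d) & ~~ (d <= a)].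
  by rewrite !f_le.
apply: (@not_injective_cover [set down d; down a] [set down a; down b :|: down d]).
- apply: set2_Pi; rewrite ?down_Jconn //.
  by apply: (intersect_nontriviallyW (x := c) (a := d) (b := a)); rewrite !in_down ?lexx.
- apply: set2_Pi; rewrite ?down_Jconn ?(down_setU_Jconn cb cd) //.
  by apply: (intersect_nontriviallyW (x := c) (a := a) (b := d));
    rewrite !inE ?lexx ?ca ?cb ?orbT // negb_or ab ad.
- apply: set2_neq.
    by apply: (set_neq_witness (x := d)); rewrite !in_down ?lexx.
  by rewrite eq_sym; apply: (set_neq_witness (x := b)); rewrite !inE ?lexx.
- by rewrite !cover2 setUC setUA (setUidPl (down_subset ba)).
Qed.

Lemma P2_not_injective : induced_subposet leP2 P -> ~ {in @Pi _ P &, injective cover}.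
Proof.
case=> F [_ F_le].
pose e := F (@Ordinal 5 0 isT); pose f := F (@Ordinal 5 1 isT).
pose g := F (@Ordinal 5 2 isT); pose h := F (@Ordinal 5 3 isT).
pose i := F (@Ordinal 5 4 isT).
have [fe fg hg hi] : [/\ f <= e, f <= g, h <= g & h <= i] by rewrite !F_le.
have [eg ei ge ie ig] :
  [/\ ~~ (e <= g), ~~ (e <= i), ~~ (g <= e), ~~ (i <= e) & ~~ (i <= g)].
  by rewrite !F_le.
have eg_conn := down_setU_Jconn fe fg; have gi_conn := down_setU_Jconn hg hi.
apply: (@not_injective_cover [set down e :|: down g; down g :|: down i]
                             [set down e; down g :|: down i]).
- apply: set2_Pi => //.
  by apply: (intersect_nontriviallyW (x := g) (a := e) (b := i));
    rewrite !inE ?lexx ?orbT // negb_or ?eg ?ei ?ie ?ig.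
- apply: set2_Pi; rewrite ?down_Jconn //.
  by apply: (intersect_nontriviallyW (x := f) (a := e) (b := g));
    rewrite !inE ?lexx ?fe ?fg // negb_or eg ei.
- apply: set2_neq.
    by apply: (set_neq_witness (x := g)); rewrite !inE ?lexx ?orbT.
  by apply: (set_neq_witness (x := e)); rewrite !inE ?lexx // negb_or eg ei.
- by rewrite !cover2 -setUA (setUA (down g)) setUid.
Qed.

Lemma P3_not_injective : induced_subposet leP3 P -> ~ {in @Pi _ P &, injective cover}.
Proof.
case=> f [_ f_le].
pose x := f (@Ordinal 4 0 isT); pose y1 := f (@Ordinal 4 1 isT).
pose y2 := f (@Ordinal 4 2 isT); pose y3 := f (@Ordinal 4 3 isT).
have [xy1 xy2 xy3] : [/\ x <= y1, x <= y2 & x <= y3] by rewrite !f_le.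
have [y12 y13 y21] : [/\ ~~ (y1 <= y2), ~~ (y1 <= y3) & ~~ (y2 <= y1)] by rewrite !f_le.
have [y23 y31 y32] : [/\ ~~ (y2 <= y3), ~~ (y3 <= y1) & ~~ (y3 <= y2)] by rewrite !f_le.
apply: (@not_injective_cover [set down y3; down y1 :|: down y2]
                             [set down y1 :|: down y3; down y2]).
- apply: set2_Pi; rewrite ?down_Jconn ?(down_setU_Jconn xy1 xy2) //.
  by apply: (intersect_nontriviallyW (x := x) (a := y3) (b := y1));
    rewrite !inE ?lexx ?xy1 ?xy3 // negb_or y31 y32.
- apply: set2_Pi; rewrite ?down_Jconn ?(down_setU_Jconn xy1 xy3) //.
  by apply: (intersect_nontriviallyW (x := x) (a := y1) (b := y2));
    rewrite !inE ?lexx ?xy1 ?xy2 // negb_or y21 y23.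
- apply: set2_neq.
    by rewrite eq_sym; apply: (set_neq_witness (x := y1)); rewrite !inE ?lexx.
  by apply: (set_neq_witness (x := y3)); rewrite !inE ?lexx.
- by rewrite !cover2 setUCA setUA.
Qed.

Lemma induced_subposetW (Q : finType) (leQ : rel Q) (f : Q -> P) :
  antisymmetric leQ -> (forall i j : Q, (f i <= f j) = leQ i j) ->
  induced_subposet leQ P.
Proof.
move=> antiQ f_le; exists f; split=> // i j fij.
by apply: antiQ; rewrite -!f_le fij lexx.
Qed.

Lemma induced_P1 (a b c d : P) : c <= b -> c <= a -> b <= a -> c <= d ->
  ~~ (a <= b) -> ~~ (a <= c) -> ~~ (a <= d) -> ~~ (b <= c) -> ~~ (b <= d) ->
  ~~ (d <= a) -> ~~ (d <= b) -> ~~ (d <= c) -> induced_subposet leP1 P.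
Proof.
move=> *; apply: (@induced_subposetW _ _ (fun q : 'I_4 => nth a [:: a; b; c; d] q)).
  by move=> [[|[|[|[|?]]]] ?] [[|[|[|[|?]]]] ?] //= _; apply: val_inj.
by move=> [[|[|[|[|?]]]] ?] [[|[|[|[|?]]]] ?] //=; rewrite ?lexx //; apply/negbTE.
Qed.

Lemma induced_P2 (e f g h i : P) : f <= e -> f <= g -> h <= g -> h <= i ->
  ~~ (e <= f) -> ~~ (e <= g) -> ~~ (e <= h) -> ~~ (e <= i) ->
  ~~ (f <= h) -> ~~ (f <= i) ->
  ~~ (g <= e) -> ~~ (g <= f) -> ~~ (g <= h) -> ~~ (g <= i) ->
  ~~ (h <= e) -> ~~ (h <= f) ->
  ~~ (i <= e) -> ~~ (i <= f) -> ~~ (i <= g) -> ~~ (i <= h) ->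
  induced_subposet leP2 P.
Proof.
move=> *; apply: (@induced_subposetW _ _ (fun q : 'I_5 => nth e [:: e; f; g; h; i] q)).
  by move=> [[|[|[|[|[|?]]]]] ?] [[|[|[|[|[|?]]]]] ?] //= _; apply: val_inj.
by move=> [[|[|[|[|[|?]]]]] ?] [[|[|[|[|[|?]]]]] ?] //=; rewrite ?lexx //; apply/negbTE.
Qed.

Lemma induced_P3 (x y1 y2 y3 : P) : x <= y1 -> x <= y2 -> x <= y3 ->
  ~~ (y1 <= x) -> ~~ (y2 <= x) -> ~~ (y3 <= x) ->
  ~~ (y1 <= y2) -> ~~ (y1 <= y3) -> ~~ (y2 <= y1) -> ~~ (y2 <= y3) ->
  ~~ (y3 <= y1) -> ~~ (y3 <= y2) -> induced_subposet leP3 P.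
Proof.
move=> *; apply: (@induced_subposetW _ _ (fun q : 'I_4 => nth x [:: x; y1; y2; y3] q)).
  by move=> [[|[|[|[|?]]]] ?] [[|[|[|[|?]]]] ?] //= _; apply: val_inj.
by move=> [[|[|[|[|?]]]] ?] [[|[|[|[|?]]]] ?] //=; rewrite ?lexx //; apply/negbTE.
Qed.

Ltac maximal_nle :=
  match goal with
  | ma : is_true (maximal_in ?J ?a), mb : is_true (maximal_in ?J ?b)
    |- is_true (~~ (@Order.le _ _ ?a _)) =>
      exact: (maximal_in_neq_le ma mb)
  end.

Lemma maximal_zigzag J (e g i f h : P) :
  maximal_in J e -> maximal_in J g -> maximal_in J i -> e != g -> g != i -> e != i ->
  f <= e -> f <= g -> h <= g -> h <= i ->
  induced_subposet leP2 P \/ induced_subposet leP3 P.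
Proof.
move=> me mg mi eg gi ei fe fg hg hi.
have [ge ig ie] : [/\ g != e, i != g & i != e] by rewrite !(eq_sym _ e) (eq_sym i).
have [fi | fi] := boolP (f <= i).
  by right; apply: (induced_P3 fe fg fi); maximal_nle.
have [he | he] := boolP (h <= e).
  by right; apply: (induced_P3 he hg hi); maximal_nle.
left; apply: (induced_P2 fe fg hg hi) => //; try maximal_nle.
  by apply: contra fi => /le_trans; apply.
by apply: contra he => /le_trans; apply.
Qed.

Lemma Jconn_maximal_link J S y :
  J \in Jconn -> S \subset [set m | maximal_in J m] -> S != set0 ->
  maximal_in J y -> y \notin S ->
  exists b s u, [/\ maximal_in J b, b \notin S, s \in S, u <= s & u <= b].
Proof.
move=> JJ /subsetP S_max /set0Pn[s0 s0S] max_y yS.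
have /JconnP[_ idJ _] := JJ.
have S_J : downset S \subset J.
  apply: downset_sub => //; apply/subsetP => s /S_max.
  by rewrite inE => /maximal_inP[].
have s0_down : s0 \in downset S by apply/downsetP; exists s0.
have [yJ _] := maximal_inP _ _ max_y.
have y_down : y \notin downset S.
  apply/downsetP => -[s sS ys]; have /S_max := sS; rewrite inE => /maximal_inP[sJ _].
  by move: yS; rewrite -((maximal_inP _ _ max_y).2 s sJ ys) sS.
have [u [b [/downsetP[s sS us] max_b ub bS]]] :=
  Jconn_exit_maximal JJ (downset_ideal S) S_J s0_down yJ y_down.
exists b, s, u; split=> //; apply: contra bS => bS'.
by apply/downsetP; exists b.
Qed.

Lemma Jconn_maximal_link1 J m1 m2 : J \in Jconn ->
  maximal_in J m1 -> maximal_in J m2 -> m1 != m2 ->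
  exists b u, [/\ maximal_in J b, b != m1, u <= m1 & u <= b].
Proof.
move=> JJ max1 max2 n12; case: (@Jconn_maximal_link J [set m1] m2) => //.
- by rewrite sub1set inE.
- by apply/set0Pn; exists m1; rewrite inE.
- by rewrite inE eq_sym.
by move=> b [_ [u [max_b bS /set1P-> um1 ub]]]; exists b, u; rewrite -in_set1.
Qed.

Section NoPatterns.
Hypothesis noP2 : ~ induced_subposet leP2 P.
Hypothesis noP3 : ~ induced_subposet leP3 P.

Lemma no_maximal_zigzag J (e g i f h : P) :
  maximal_in J e -> maximal_in J g -> maximal_in J i -> e != g -> g != i -> e != i ->
  f <= e -> f <= g -> h <= g -> h <= i -> False.
Proof. by move=> *; case: (@maximal_zigzag J e g i f h). Qed.

Lemma no_three_maximal J m1 m2 m3 : J \in Jconn ->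
  maximal_in J m1 -> maximal_in J m2 -> maximal_in J m3 ->
  m1 != m2 -> m1 != m3 -> m2 != m3 -> False.
Proof.
move=> JJ max1 max2 max3 n12 n13 n23.
have [a [u1 [max_a a_m1 u1m1 u1a]]] := Jconn_maximal_link1 JJ max1 max2 n12.
have [y [max_y y_m1 y_a]] : exists y, [/\ maximal_in J y, y != m1 & y != a].
  have [a2 | a2] := eqVneq a m2.
    by exists m3; split=> //; rewrite ?a2 eq_sym.
  by exists m2; split=> //; rewrite eq_sym.
case: (@Jconn_maximal_link J [set m1; a] y) => //.
- by apply/subsetP => z /set2P[]->; rewrite inE.
- by apply/set0Pn; exists m1; rewrite set21.
- by rewrite !inE negb_or y_m1.
move=> b [s [u2 [max_b bS /set2P[]-> u2s u2b]]];
  have [b_m1 b_a] : b != m1 /\ b != a by move: bS; rewrite !inE negb_or => /andP[].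
- by apply: (no_maximal_zigzag max_a max1 max_b _ _ _ u1a u1m1 u2s u2b); rewrite // eq_sym.
- by apply: (no_maximal_zigzag max1 max_a max_b _ _ _ u1m1 u1a u2s u2b); rewrite // eq_sym.
Qed.

Lemma maximal_common_lower_bound J m1 m2 : J \in Jconn ->
  maximal_in J m1 -> maximal_in J m2 -> m1 != m2 -> exists2 x, x <= m1 & x <= m2.
Proof.
move=> JJ max1 max2 n12.
have [b [u [max_b b_m1 um1 ub]]] := Jconn_maximal_link1 JJ max1 max2 n12.
have [b_eq | b_m2] := eqVneq b m2; first by exists u; rewrite -?b_eq.
by case: (no_three_maximal JJ max1 max2 max_b n12); rewrite eq_sym.
Qed.

Hypothesis noP1 : ~ induced_subposet leP1 P.

Lemma Pi_member_down A B m : A \in Jconn -> B \in Jconn -> intersect_nontrivially A B ->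
  maximal_in (A :|: B) m -> m \in A -> A = down m.
Proof.
move=> AJ BJ /and3P[AB _ BnA] max_m mA.
have JJ := Jconn_setU AJ BJ AB.
have /JconnP[_ /order_idealP idA _] := AJ.
apply/setP => y; rewrite in_down; apply/idP/idP => [yA | ym]; last exact: idA ym.
apply/negPn/negP => ym.
(* Then the maximal element m2 of A :|: B outside A, the maximal element y' of A
   above y and a common lower bound x of y' and m form a copy of P1. *)
have [z zB zA] := subsetPn BnA.
have [m2 max_m2 zm2] : exists2 m2, maximal_in (A :|: B) m2 & z <= m2.
  by apply: exists_maximal; rewrite inE zB orbT.
have m2A : m2 \notin A by apply: contra zA => m2A; apply: idA zm2.
have m2_m : m2 != m by apply: contraNneq m2A => ->.
have m_m2 : m != m2 by rewrite eq_sym.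
have [y' max_y' yy'] := exists_maximal yA.
have [y'A _] := maximal_inP _ _ max_y'.
have m_y' : m != y' by apply: contraNneq ym => ->.
have [x xm xy'] :=
  maximal_common_lower_bound AJ (maximal_in_sub (subsetUl A B) mA max_m) max_y' m_y'.
have [m3 max_m3 y'm3] : exists2 m3, maximal_in (A :|: B) m3 & y' <= m3.
  by apply: exists_maximal; rewrite inE y'A.
have y'm2 : y' <= m2.
  have [<- // | m3_m2] := eqVneq m3 m2.
  have m3_m : m3 != m by apply: contraNneq ym => m3m; rewrite (le_trans yy') -?m3m.
  by case: (no_three_maximal JJ max_m max_m2 max_m3 m_m2); rewrite eq_sym.
have xm2 := le_trans xy' y'm2.
have y'_m2 : y' != m2 by apply: contraNneq m2A => <-.
apply: noP1; apply: (induced_P1 xy' xm2 y'm2 xm) => //; try maximal_nle.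
- by apply: maximal_in_nle max_m2 _ y'_m2; rewrite inE y'A.
- by apply: contra ym => /le_trans/(_ xm); apply: le_trans yy'.
- by apply: contra ym; apply: le_trans yy'.
Qed.

Lemma Pi_member_principal A B : A \in Jconn -> B \in Jconn -> intersect_nontrivially A B ->
  exists2 m, maximal_in (A :|: B) m & A = down m.
Proof.
move=> AJ BJ AB; have /and3P[_ /subsetPn[a aA aB] _] := AB.
have [m max_m am] : exists2 m, maximal_in (A :|: B) m & a <= m.
  by apply: exists_maximal; rewrite inE aA.
have mA : m \in A.
  have /maximal_inP[/setUP[// | mB] _] := max_m.
  by have /JconnP[_ /order_idealP idB _] := BJ; rewrite (idB a m mB am) in aB.
by exists m; last exact: Pi_member_down max_m mA.
Qed.

Lemma Pi_eq_down_maximal p : p \in Pi -> p = down @: [set m | maximal_in (cover p) m].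
Proof.
case/PiP => A [B [AJ BJ AB ->]]; rewrite cover2.
have BA : intersect_nontrivially B A.
  by move: AB; rewrite /intersect_nontrivially disjoint_sym [~~ (A \subset B) && _]andbC.
have [m max_m eA] := Pi_member_principal AJ BJ AB.
have [m' max_m' eB] := Pi_member_principal BJ AJ BA; rewrite setUC in max_m'.
have /and3P[AB_meet AnB _] := AB.
have mm' : m != m' by apply: contraNneq AnB => mm'; rewrite eA eB mm'.
have -> : [set z | maximal_in (A :|: B) z] = [set m; m'].
  apply/setP => z; rewrite !inE; apply/idP/idP => [max_z | /orP[]/eqP-> //].
  apply: contraT; rewrite negb_or => /andP[zm zm'].
  by case: (no_three_maximal (Jconn_setU AJ BJ AB_meet) max_m max_m' max_z mm');
    rewrite eq_sym.
by rewrite imsetU1 imset_set1 eA eB.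
Qed.

Lemma cover_injective : {in @Pi _ P &, injective cover}.
Proof.
move=> p q pP qP pq.
by rewrite (Pi_eq_down_maximal pP) (Pi_eq_down_maximal qP) pq.
Qed.

End NoPatterns.
End ConnectedIdeals.


Theorem theorem10p5 (disp : Order.disp_t) (P : finPOrderType disp) :
  ci_poset P <->
  [/\ ~ induced_subposet leP1 P, ~ induced_subposet leP2 P
    & ~ induced_subposet leP3 P].
Proof.
apply: iff_trans ci_posetE _; split=> [inj | [noP1 noP2 noP3]].
  by split=> [/P1_not_injective | /P2_not_injective | /P3_not_injective].
exact: cover_injective.
Qed.
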